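(* Let $P$ be a finite order having no level-induced suborder isomorphic to $O_{obs1}$ and no level-induced suborder isomorphic to $O_{obs2}$ (in particular, any finite order with property (itov)). Then $P$ has a relatively maximum full trunk.
   Context: Orders are partial orders; $x\sim y$ means $x\ne y$ and $x,y$ incomparable. $O_{obs1}$ is the order on $\{a,b,c,d\}$ whose only comparabilities are $a<b$, $c<d$; $O_{obs2}$ is the order on $\{a,b,c,d\}$ whose only comparabilities are $a<b$, $c<d$, $c<b$. Property (itov): no induced suborder isomorphic to $O_{obs1}$ or $O_{obs2}$. For a well-founded (e.g. finite) order $Q$, $\mathrm{Level}_Q(x)=\sup\{\mathrm{Level}_Q(y)+1:y<x\}$. A level-induced suborder of $P$ is a subset $S$ with the induced order $P|_S$ such that for all $x,y\in S$: $\mathrm{Level}_{P|_S}(x)=\mathrm{Level}_{P|_S}(y)$ iff $\mathrm{Level}_P(x)=\mathrm{Level}_P(y)$. A trunk of $P$ is a subset $T$ such that for pairwise distinct $x,y,z\in T$, $x\sim y$ and $y\sim z$ imply $x\sim z$. A chain is maximum if it has maximum cardinality among chains of $P$. A full trunk is a trunk containing a maximum chain; a relatively maximum full trunk is a full trunk that is the unique inclusion-maximal full trunk of $P$. *)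

From mathcomp Require Import all_boot.
Set Implicit Arguments. Unset Strict Implicit. Unset Printing Implicit Defensive.

Section Orders.
Variables (T : finType) (le : rel T).

Definition partial_order : Prop :=
  [/\ reflexive le, antisymmetric le & transitive le].

Definition lt (x y : T) : bool := (x != y) && le x y.

Definition incomp (x y : T) : bool := [&& x != y, ~~ le x y & ~~ le y x].

(* Level of x in the induced suborder P|_S, by the recursion
   Level(x) = sup { Level(y)+1 : y < x, y in S }  (sup of empty = 0),
   computed with fuel; fuel #|T| is always sufficient (strict chains in a
   finite order have fewer than #|T| steps). *)
Fixpoint level_fuel (S : {set T}) (n : nat) (x : T) : nat :=
  match n with
  | 0 => 0
  | n'.+1 => \max_(y in S | lt y x) (level_fuel S n' y).+1
  end.

Definition level (S : {set T}) (x : T) : nat := level_fuel S #|T| x.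

Definition level_induced (S : {set T}) : Prop :=
  forall x y, x \in S -> y \in S ->
    (level S x == level S y) = (level [set: T] x == level [set: T] y).

(* The obstruction orders on {a,b,c,d} = {0,1,2,3} (a=0,b=1,c=2,d=3). *)
Definition O_obs1 (i j : 'I_4) : bool :=
  [|| i == j, (val i == 0) && (val j == 1) | (val i == 2) && (val j == 3)].

Definition O_obs2 (i j : 'I_4) : bool :=
  [|| i == j, (val i == 0) && (val j == 1), (val i == 2) && (val j == 3)
    | (val i == 2) && (val j == 1)].

Definition induced_iso (S : {set T}) (O : rel 'I_4) : Prop :=
  exists f : 'I_4 -> T,
    [/\ injective f, f @: [set: 'I_4] = S &
        forall i j, le (f i) (f j) = O i j].

Definition trunk (A : {set T}) : Prop :=
  forall x y z, x \in A -> y \in A -> z \in A ->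
    x != y -> y != z -> x != z ->
    incomp x y -> incomp y z -> incomp x z.

Definition chain (C : {set T}) : Prop :=
  forall x y, x \in C -> y \in C -> le x y || le y x.

Definition maximum_chain (C : {set T}) : Prop :=
  chain C /\ forall C' : {set T}, chain C' -> #|C'| <= #|C|.

Definition full_trunk (A : {set T}) : Prop :=
  trunk A /\ exists C, maximum_chain C /\ C \subset A.

Definition maximal_full_trunk (A : {set T}) : Prop :=
  full_trunk A /\ forall B, full_trunk B -> A \subset B -> B = A.

Definition relatively_maximum_full_trunk (A : {set T}) : Prop :=
  maximal_full_trunk A /\ forall B, maximal_full_trunk B -> B = A.

End Orders.

(* Write L for the level function of P.  The proof rests on three facts.
   (1) L is strictly monotone, and along a maximum chain C it takes every
       value 0, ..., #|C|-1 exactly once.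
   (2) If a trunk A contains a maximum chain C and x is in A, then x is
       comparable to every element of C lying on a level other than L x:
       the element of C on level L x is equal to x, because the trunk
       property forces it to be comparable to x.
   (3) Four elements a <= b, c <= d with a, c on one level and b, d on a
       higher one, a distinct from c, b distinct from d and a not below d
       span a level-induced copy of O_obs1 or O_obs2 (according as c <= b).
   Given two full trunks A1, A2 and incomparable x in A1, y in A2 with
   L x < L y, fact (2) gives x <= c in A1 and d <= y in A2 with L c = L y and
   L d = L x, which fact (3) rules out.  Hence incomparable elements of the
   union U of all full trunks lie on the same level, which makes U a trunk;
   U contains a maximum chain and every full trunk, so it is the unique
   maximal full trunk. *)
From Pilot Require Import Defs.
From mathcomp Require Import all_boot zify boolp.
Set Implicit Arguments. Unset Strict Implicit. Unset Printing Implicit Defensive.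

(* The two obstruction relations are antisymmetric, so any map realising them
   is injective. *)
Lemma O_obs1_anti : antisymmetric O_obs1.
Proof.
move=> i j /andP[]; case: i j => [[|[|[|[|i]]]] lti] [[|[|[|[|j]]]] ltj] //= _ _;
  exact: val_inj.
Qed.

Lemma O_obs2_anti : antisymmetric O_obs2.
Proof.
move=> i j /andP[]; case: i j => [[|[|[|[|i]]]] lti] [[|[|[|[|j]]]] ltj] //= _ _;
  exact: val_inj.
Qed.

Section Levels.
Variables (T : finType) (le : rel T).
Hypotheses (le_refl : reflexive le) (le_anti : antisymmetric le)
  (le_trans : transitive le).

Local Notation lt := (Defs.lt le).
Local Notation L := (level le [set: T]).

Lemma ltW x y : lt x y -> le x y.
Proof. by case/andP. Qed.

Lemma lt_def x y : le x y -> x != y -> lt x y.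
Proof. by move=> lxy nxy; apply/andP. Qed.

Lemma lt_geF x y : lt x y -> le y x = false.
Proof.
case/andP=> nxy lxy; apply/negP => lyx.
by move: nxy; rewrite (le_anti (x := x) (y := y)) ?lxy ?lyx ?eqxx.
Qed.

Lemma lt_trans x y z : lt x y -> lt y z -> lt x z.
Proof.
move=> ltxy ltyz; apply: lt_def; first exact: le_trans (ltW ltxy) (ltW ltyz).
by apply/eqP=> exz; subst z; move: (lt_geF ltxy); rewrite (ltW ltyz).
Qed.

Lemma level_fuel_stable n x : #|[set z | lt z x]| < n ->
  level_fuel le setT n x = level_fuel le setT n.+1 x.
Proof.
elim: n x => [//|n IH] x below_x /=.
apply: eq_bigr => y /andP[_ ltyx]; congr S; apply: IH.
have : [set z | lt z y] \proper [set z | lt z x].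
  apply/properP; split.
    by apply/subsetP => z; rewrite !inE => ltzy; exact: lt_trans ltzy ltyx.
  by exists y; rewrite !inE /Defs.lt ?eqxx ?ltyx.
by move/proper_card; lia.
Qed.

Lemma card_strictly_below x : #|[set z | lt z x]| < #|T|.
Proof.
have /subset_leq_card : [set z | lt z x] \subset [set~ x].
  by apply/subsetP => z; rewrite !inE => /andP[].
have : 0 < #|T| by apply/card_gt0P; exists x.
by rewrite cardsC1; lia.
Qed.

Lemma levelE x : L x = \max_(y in [set: T] | lt y x) (L y).+1.
Proof. by rewrite /level (level_fuel_stable (card_strictly_below x)). Qed.

Lemma level_lt x y : lt x y -> L x < L y.
Proof.
move=> ltxy; rewrite (levelE y).
by apply: (leq_bigmax_cond (P := fun z => (z \in [set: T]) && lt z y)); rewrite inE.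
Qed.

Lemma level_le x y : le x y -> L x <= L y.
Proof.
by case: (eqVneq x y) => [-> // | nxy lexy]; exact/ltnW/level_lt/lt_def.
Qed.

Lemma same_level_le x y : le x y -> L x = L y -> x = y.
Proof.
move=> lexy Lxy; apply/eqP/negPn/negP => nxy.
by move: (level_lt (lt_def lexy nxy)); rewrite Lxy ltnn.
Qed.

Lemma same_level_leF x y : L x = L y -> x != y -> le x y = false.
Proof. by move=> Lxy; apply: contraNF => /same_level_le ->. Qed.

Lemma same_level_incomp x y : L x = L y -> x != y -> incomp le x y.
Proof.
move=> Lxy nxy; rewrite /incomp nxy (same_level_leF Lxy nxy).
by rewrite (same_level_leF (esym Lxy)) // eq_sym.
Qed.

Lemma level_gt_leF x y : L y < L x -> le x y = false.
Proof. by move=> Lyx; apply/negP => /level_le; rewrite leqNgt Lyx. Qed.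

Lemma chain_below x : exists2 D : {set T},
  chain le D /\ (forall d, d \in D -> le d x) & #|D| = (L x).+1.
Proof.
move: {2}(L x) (erefl (L x)) => k; elim: k x => [|k IH] x Lx.
  exists [set x]; last by rewrite cards1 -Lx.
  by split=> [a b | d]; rewrite !inE; [move=> /eqP-> /eqP-> | move=> /eqP->];
    rewrite le_refl.
have below_x : 0 < #|(fun y => (y \in [set: T]) && lt y x)|.
  apply/card_gt0P; case: (pickP (fun y => (y \in [set: T]) && lt y x)).
    by move=> y lt_yx; exists y.
  by move=> none; move: Lx; rewrite levelE big_pred0.
have [y /andP[_ ltyx] Lx_max] := eq_bigmax_cond (fun y => (L y).+1) below_x.
move: Lx; rewrite levelE Lx_max => -[/IH[D [chD D_le_y] cardD]].
have D_le_x d : d \in D -> le d x by move/D_le_y/le_trans; apply; exact: ltW.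
exists (x |: D); first split.
- move=> a b; rewrite !inE => /predU1P[->|aD] /predU1P[->|bD].
  + by rewrite le_refl.
  + by rewrite D_le_x ?orbT.
  + by rewrite D_le_x.
  + exact: chD.
- by move=> d /setU1P[->|/D_le_x].
- rewrite cardsU1 cardD; case: (boolP (x \in D)) => //= xD.
  by move: (lt_geF ltyx); rewrite D_le_y.
Qed.

Section MaximumChain.
Variable C : {set T}.
Hypothesis maxC : maximum_chain le C.

Lemma level_lt_max_chain x : L x < #|C|.
Proof. by have [D [chD _] <-] := chain_below x; exact: maxC.2. Qed.

(* Along a maximum chain, L is injective with values below #|C|, hence it
   reaches every level below #|C|. *)
Lemma max_chain_level_onto k : k < #|C| -> exists2 c, c \in C & L c = k.
Proof.
move=> ltkC; have [chC _] := maxC.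
have uniq_levels : uniq (map L (enum C)).
  rewrite map_inj_in_uniq ?enum_uniq // => a b; rewrite !mem_enum => aC bC Lab.
  by case/orP: (chC a b aC bC) => /same_level_le; [apply | move/(_ (esym Lab))].
have sub_levels : {subset map L (enum C) <= iota 0 #|C|}.
  by move=> _ /mapP[c _ ->]; rewrite mem_iota level_lt_max_chain.
have size_levels : size (iota 0 #|C|) <= size (map L (enum C)).
  by rewrite size_map size_iota -cardE.
have [_ same_levels] := uniq_min_size uniq_levels sub_levels size_levels.
have := mem_iota 0 #|C| k; rewrite ltkC -same_levels => /mapP[c].
by rewrite mem_enum => cC ->; exists c.
Qed.

End MaximumChain.

Lemma incompC x y : incomp le x y = incomp le y x.
Proof. by rewrite /incomp eq_sym (andbC (~~ le x y)). Qed.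

Lemma trunk_max_chain_comparable A C x c :
  trunk le A -> maximum_chain le C -> C \subset A -> x \in A -> c \in C ->
  L c != L x -> le x c || le c x.
Proof.
move=> trA maxC CA xA cC Lcx; apply/negPn/negP => not_cmp.
have x_c : incomp le x c.
  rewrite /incomp -negb_or not_cmp andbT.
  by apply: contraNneq not_cmp => ->; rewrite le_refl.
have [c' c'C Lc'] := max_chain_level_onto maxC (level_lt_max_chain maxC x).
have nc'c : c' != c by apply: contraNneq Lcx => <-; rewrite Lc'.
have x_c' : x = c'.
  apply/eqP/negPn/negP => nxc'.
  have : incomp le c c'.
    apply: (trA c x c' (subsetP CA _ cC) xA (subsetP CA _ c'C) _ nxc' _ _
                (same_level_incomp (esym Lc') nxc')).
    - by rewrite eq_sym; case/and3P: x_c.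
    - by rewrite eq_sym.
    - by rewrite incompC.
  case/and3P=> _ /negbTE not_le_cc' /negbTE not_le_c'c.
  by move: (maxC.1 c c' cC c'C); rewrite not_le_cc' not_le_c'c.
by move: not_cmp; rewrite x_c' (maxC.1 _ _ c'C cC).
Qed.

Lemma level_fuel_minimal (S : {set T}) n z :
  (forall u, u \in S -> lt u z = false) -> level_fuel le S n z = 0.
Proof.
case: n => //= n min_z; rewrite big_pred0 // => u.
by case: (boolP (u \in S)) => //= /min_z.
Qed.

Section TwoLevels.
Variables (S : {set T}) (l0 l1 : nat).
Hypotheses (lt_l01 : l0 < l1)
  (S_levels : forall z, z \in S -> (L z == l0) || (L z == l1))
  (S_upper : forall z, z \in S -> L z = l1 -> exists2 u, u \in S & lt u z).

Lemma two_levels_level z : z \in S -> level le S z = (L z == l1).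
Proof.
move=> zS.
have lower_minimal u :
    u \in S -> L u = l0 -> forall w, w \in S -> lt w u = false.
  move=> uS Lu w wS; apply/negP => /level_lt.
  by case/orP: (S_levels wS) => /eqP->; rewrite Lu ?ltnn // ltnNge ltnW.
have [n cardT] : exists n, #|T| = n.+1.
  by exists #|T|.-1; rewrite prednK //; apply/card_gt0P; exists z.
rewrite [level le S z]/level cardT /=.
rewrite (eq_bigr (fun _ => 1)); last first.
  move=> y /andP[yS ltyz]; rewrite level_fuel_minimal // => u uS.
  apply: lower_minimal => //; move: (level_lt ltyz).
  by case/orP: (S_levels yS) => /eqP->; case/orP: (S_levels zS) => /eqP->;
    rewrite ?ltnn // => /ltn_trans/(_ lt_l01); rewrite ltnn.
case/orP: (S_levels zS) => /eqP Lz.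
  rewrite big_pred0 ?Lz ?(ltn_eqF lt_l01) // => y.
  by apply/negP => /andP[yS]; rewrite (lower_minimal z).
have [u uS ltuz] := S_upper zS Lz; rewrite Lz eqxx.
apply/eqP; rewrite eqn_leq; apply/andP; split; first exact/bigmax_leqP.
apply: (leq_bigmax_cond (P := fun y => (y \in S) && lt y z) (F := fun _ => 1) u).
by rewrite uS.
Qed.

Lemma two_levels_level_induced : level_induced le S.
Proof.
move=> x y xS yS; rewrite !two_levels_level //.
have ne10 : (l1 == l0) = false by rewrite eq_sym ltn_eqF.
by case/orP: (S_levels xS) => /eqP->; case/orP: (S_levels yS) => /eqP->;
  rewrite ?eqxx ?ne10 ?(ltn_eqF lt_l01).
Qed.

End TwoLevels.

Lemma induced_iso_image (O : rel 'I_4) (f : 'I_4 -> T) :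
  antisymmetric O -> (forall i j, le (f i) (f j) = O i j) ->
  induced_iso le (f @: [set: 'I_4]) O.
Proof.
move=> antiO le_f; exists f; split=> // i j fij.
by apply: antiO; rewrite -!le_f fij le_refl.
Qed.

Section Obstructions.
Hypotheses
  (no_obs1 : forall S : {set T}, level_induced le S -> ~ induced_iso le S O_obs1)
  (no_obs2 : forall S : {set T}, level_induced le S -> ~ induced_iso le S O_obs2).

Lemma no_crossing_pairs a b c d :
  le a b -> le c d -> ~~ le a d -> a != c -> b != d ->
  L a = L c -> L b = L d -> L a < L b -> False.
Proof.
move=> ab cd /negbTE ad nac nbd Lac Lbd Lab.
pose f (i : 'I_4) := nth a [:: a; b; c; d] i.
set S := f @: [set: 'I_4].
have S_cases z : z \in S -> [\/ z = a, z = b, z = c | z = d].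
  case/imsetP=> -[[|[|[|[|i]]]] lti] _ -> //=;
    by [constructor 1 | constructor 2 | constructor 3 | constructor 4].
have aS : a \in S by apply/imsetP; exists (@Ordinal 4 0 isT).
have cS : c \in S by apply/imsetP; exists (@Ordinal 4 2 isT).
have nab : a != b by apply: contraTneq Lab => ->; rewrite ltnn.
have ncd : c != d by apply: contraTneq Lab => eq_cd; rewrite Lac Lbd eq_cd ltnn.
have S_induced : level_induced le S.
  apply: (two_levels_level_induced Lab).
    by move=> z /S_cases[]->; rewrite -?Lac -?Lbd !eqxx ?orbT.
  move=> z /S_cases[]-> Lz; try by move: Lab; rewrite -Lz ?Lac ltnn.
    by exists a; last exact: lt_def ab nab.
  by exists c; last exact: lt_def cd ncd.
have ba := level_gt_leF Lab.
have da : le d a = false by apply: level_gt_leF; rewrite -Lbd.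
have bc : le b c = false by apply: level_gt_leF; rewrite -Lac.
have dc : le d c = false by apply: level_gt_leF; rewrite -Lac -Lbd.
have ac := same_level_leF Lac nac.
have ca : le c a = false by apply: same_level_leF; rewrite 1?eq_sym.
have bd := same_level_leF Lbd nbd.
have db : le d b = false by apply: same_level_leF; rewrite 1?eq_sym.
have le_f i j : le (f i) (f j) = (if le c b then O_obs2 else O_obs1) i j.
  case: i j => [[|[|[|[|i]]]] lti] // [[|[|[|[|j]]]] ltj] //=;
    by rewrite /O_obs1 /O_obs2 /= ?le_refl ?ab ?cd ?ad ?ba ?da ?bc ?dc ?ac ?ca ?bd ?db;
      case: (le c b).
case: (le c b) le_f => le_f.
- exact: no_obs2 S_induced (induced_iso_image O_obs2_anti le_f).
- exact: no_obs1 S_induced (induced_iso_image O_obs1_anti le_f).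
Qed.

(* Incomparable elements of two full trunks lie on the same level: otherwise
   fact (2) produces two crossing pairs forbidden by fact (3). *)
Lemma full_trunks_incomp_level A1 A2 x y :
  full_trunk le A1 -> full_trunk le A2 -> x \in A1 -> y \in A2 ->
  incomp le x y -> L x = L y.
Proof.
wlog ltxy : A1 A2 x y / L x < L y.
  move=> main ft1 ft2 xA1 yA2 xy; case: (ltngtP (L x) (L y)) => // [ltxy|ltyx].
    exact: (main A1 A2).
  by apply/esym; apply: (main A2 A1) => //; rewrite incompC.
move=> [tr1 [C1 [max1 C1A1]]] [tr2 [C2 [max2 C2A2]]] xA1 yA2.
case/and3P=> _ /negbTE not_le_xy _; exfalso.
have [c cC1 Lc] := max_chain_level_onto max1 (level_lt_max_chain max1 y).
have [d dC2 Ld] := max_chain_level_onto max2 (level_lt_max_chain max2 x).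
have le_xc : le x c.
  have Lcx : L c != L x by rewrite Lc gtn_eqF.
  have := trunk_max_chain_comparable tr1 max1 C1A1 xA1 cC1 Lcx.
  by rewrite (@level_gt_leF c x) ?Lc //= orbF.
have le_dy : le d y.
  have Ldy : L d != L y by rewrite Ld ltn_eqF.
  have := trunk_max_chain_comparable tr2 max2 C2A2 yA2 dC2 Ldy.
  by rewrite (@level_gt_leF y d) ?Ld.
have not_le_xd : ~~ le x d.
  by apply: contraFN not_le_xy => le_xd; exact: le_trans le_xd le_dy.
apply: (no_crossing_pairs le_xc le_dy (negbT not_le_xy)); rewrite ?Lc ?Ld //.
- by apply: contraNneq not_le_xd => ->; rewrite le_refl.
- by apply: contraFneq not_le_xy => <-.
Qed.

End Obstructions.

Lemma level_trunk (A : {set T}) :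
  {in A &, forall x y, incomp le x y -> L x = L y} -> trunk le A.
Proof.
move=> A_level x y z xA yA zA _ _ nxz xy yz.
by apply: same_level_incomp nxz; rewrite (A_level x y) // (A_level y z).
Qed.

End Levels.

Lemma chain_trunk (T : finType) (le : rel T) (C : {set T}) :
  chain le C -> trunk le C.
Proof.
move=> chC x y z xC yC _ _ _ _ /and3P[_ /negbTE nxy /negbTE nyx].
by move: (chC x y xC yC); rewrite nxy nyx.
Qed.

Lemma exists_maximum_chain (T : finType) (le : rel T) :
  exists C : {set T}, maximum_chain le C.
Proof.
have chain0 : `[< chain le set0 >] by apply/asboolP => x y; rewrite inE.
have [C /asboolP chC maxC] :=
  @arg_maxnP _ set0 (fun C => `[< chain le C >]) (fun C => #|C|) chain0.
by exists C; split=> // C' chC'; apply/maxC/asboolP.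
Qed.

Lemma greatest_full_trunk (T : finType) (le : rel T) (U : {set T}) :
  full_trunk le U -> (forall A, full_trunk le A -> A \subset U) ->
  relatively_maximum_full_trunk le U.
Proof.
move=> ftU greatest.
have maxU : maximal_full_trunk le U.
  by split=> // B ftB UB; apply/eqP; rewrite eqEsubset UB greatest.
by split=> // B [ftB maxB]; apply/esym/maxB; rewrite ?greatest.
Qed.

Theorem proposition8 (T : finType) (le : rel T) :
  partial_order le ->
  (forall S : {set T}, level_induced le S -> ~ induced_iso le S (@O_obs1)) ->
  (forall S : {set T}, level_induced le S -> ~ induced_iso le S (@O_obs2)) ->
  exists A : {set T}, relatively_maximum_full_trunk le A.
Proof.
case=> le_refl le_anti le_trans no_obs1 no_obs2.
pose U := [set x | `[< exists2 A, full_trunk le A & x \in A >]].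
have sub_U A : full_trunk le A -> A \subset U.
  by move=> ftA; apply/subsetP => x xA; rewrite inE; apply/asboolP; exists A.
have U_trunk : trunk le U.
  apply: level_trunk => // x y; rewrite !inE => /asboolP[A1 ft1 xA1] /asboolP[A2 ft2 yA2].
  exact: full_trunks_incomp_level ft1 ft2 xA1 yA2.
have [C maxC] := exists_maximum_chain le.
have ftC : full_trunk le C by split; [exact: chain_trunk maxC.1 | exists C].
exists U; apply: greatest_full_trunk => //.
by split=> //; exists C; split=> //; exact: sub_U.
Qed.
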